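(* Let $n,m\in\mathbb{N}$ with $2\le m\le n-1$, let $H(\psi),H(\chi)\in Z_{n,m}$, and let $U_m$ be the stabiliser of $1$ in $S_m$. Then: (i) $H(\psi)\cong H(\chi)$ if and only if $\psi$ and $\chi$ lie in the same orbit of the power group $S_{[n]\setminus[m]}^{\times 2}\times U_m$; (ii) $H(\psi)$ and $H(\chi)$ are isomorphic or anti-isomorphic if and only if $\psi$ and $\chi$ lie in the same orbit of the power group $2S_{[n]\setminus[m]}^{\times 2}\times U_m$; (iii) if moreover $H(\psi)$ and $H(\chi)$ are commutative, then $H(\psi)\cong H(\chi)$ if and only if $\psi'$ and $\chi'$ lie in the same orbit of the power group $S_{[n]\setminus[m]}^{\{2\}}\times U_m$.
   Context: $[n]=\{1,\ldots,n\}$. For $\psi:([n]\setminus[m])\times([n]\setminus[m])\to[m]$, $H(\psi)$ is $[n]$ with $xy=\psi(x,y)$ for $x,y\in[n]\setminus[m]$ and $xy=1$ otherwise; $Z_{n,m}$ is the set of $H(\psi)$ with $[m]\setminus\{1\}\subseteq\operatorname{im}\psi$. If $H(\psi)$ is commutative, $\psi'$ is the function on subsets of $[n]\setminus[m]$ of size $1$ or $2$ given by $\psi'\{i,j\}=\psi(i,j)$. An anti-isomorphism $S\to T$ is a bijection $f$ with $f(xy)=f(y)f(x)$. Power group: if groups $A$ and $B$ act on finite sets $X$ and $Y$, then $A\times B$ acts on functions $f:X\to Y$ by $f^{(\alpha,\beta)}(x)=(f(x^\alpha))^\beta$. Actions on $X=[n]\setminus[m]$: $S_X^{\times 2}$ is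 $S_X$ acting on $X\times X$ by $(x_1,x_2)^\alpha=(x_1^\alpha,x_2^\alpha)$; $2S_X^{\times 2}$ is $S_2\times S_X$ acting on $X\times X$ by $(x_1,x_2)^{(\pi,\alpha)}=(x_{1^\pi}^\alpha,x_{2^\pi}^\alpha)$; $S_X^{\{2\}}$ is $S_X$ acting on the set of subsets of $X$ of size $1$ or $2$ by $\{x_1,x_2\}^\alpha=\{x_1^\alpha,x_2^\alpha\}$. $U_m$ acts naturally on $[m]$. *)

From mathcomp Require Import all_boot all_fingroup.
Set Implicit Arguments. Unset Strict Implicit. Unset Printing Implicit Defensive.

(* Convention: [n] = {1,...,n} is represented by 'I_n = {0,...,n-1} via
   i+1 <-> i.  Thus [m] is 'I_m (element "1" is the ordinal with value 0),
   and X = [n] \ [m] is the subtype {i : 'I_n | m <= i}. *)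
Notation Xt n m := {i : 'I_n | m <= i}.

(* H(psi): multiplication on 'I_n; xy = psi(x,y) if x,y in X, else "1" (= 0). *)
Definition Hmul (n m : nat) (psi : Xt n m -> Xt n m -> 'I_m) (x y : 'I_n) : 'I_n :=
  insubd x (match (insub x : option (Xt n m)), (insub y : option (Xt n m)) with
            | Some x', Some y' => val (psi x' y')
            | _, _ => 0
            end).

Definition inZ (n m : nat) (psi : Xt n m -> Xt n m -> 'I_m) : Prop :=
  forall k : 'I_m, val k <> 0 -> exists x y, psi x y = k.

Definition commutative_mul (T : Type) (mul : T -> T -> T) : Prop :=
  forall x y, mul x y = mul y x.

Definition sg_isomorphic (T : Type) (mul1 mul2 : T -> T -> T) : Prop :=
  exists f : T -> T, bijective f /\ forall x y, f (mul1 x y) = mul2 (f x) (f y).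

Definition sg_anti_isomorphic (T : Type) (mul1 mul2 : T -> T -> T) : Prop :=
  exists f : T -> T, bijective f /\ forall x y, f (mul1 x y) = mul2 (f y) (f x).

Definition in_Um (m : nat) (b : {perm 'I_m}) : Prop :=
  forall k : 'I_m, val k = 0 -> b k = k.

Definition orbit_SX2_Um (n m : nat) (psi chi : Xt n m -> Xt n m -> 'I_m) : Prop :=
  exists (a : {perm Xt n m}) (b : {perm 'I_m}),
    in_Um b /\ forall x1 x2, chi x1 x2 = b (psi (a x1) (a x2)).

(* select the i-th coordinate of the pair (x1,x2), i : 'I_2 (0 <-> 1, 1 <-> 2) *)
Definition sel2 (T : Type) (x1 x2 : T) (i : 'I_2) : T :=
  if val i == 0 then x1 else x2.

Definition orbit_2SX2_Um (n m : nat) (psi chi : Xt n m -> Xt n m -> 'I_m) : Prop :=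
  exists (p : {perm 'I_2}) (a : {perm Xt n m}) (b : {perm 'I_m}),
    in_Um b /\ forall x1 x2,
      chi x1 x2 = b (psi (a (sel2 x1 x2 (p ord0))) (a (sel2 x1 x2 (p ord_max)))).

(* psi' : subsets of X of size 1 or 2 -> [m],  psi'{i,j} = psi(i,j);
   None outside the domain (sets not of size 1 or 2). *)
Definition psi' (n m : nat) (psi : Xt n m -> Xt n m -> 'I_m) (S : {set Xt n m})
  : option 'I_m :=
  match enum S with
  | [:: i] => Some (psi i i)
  | [:: i; j] => Some (psi i j)
  | _ => None
  end.

Definition orbit_SX2set_Um (n m : nat) (f g : {set Xt n m} -> option 'I_m) : Prop :=
  exists (a : {perm Xt n m}) (b : {perm 'I_m}),
    in_Um b /\ forall S : {set Xt n m}, (#|S| == 1) || (#|S| == 2) ->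
      g S = omap b (f (a @: S)).

From mathcomp Require Import all_boot all_fingroup.
From mathcomp Require Import zify.

(* Lemma 6.2.  Write [n] = [m] ⊔ X with X = [n] \ [m].  In H(psi) every
   product lies in [m], every product with a factor in [m] is 1, and on X the
   product is psi (section Layout).

   (i)  An isomorphism f : H(psi) -> H(chi) fixes 1, since f 1 = f 1 · f 1 is
        a product in H(chi), hence in [m], hence equal to 1; and it maps [m]
        into [m], since (H(psi) being in Z_{n,m}) every element of [m] \ {1}
        is a product.  An injective map preserving [m] restricts to a
        permutation b of [m] and, by counting, to a permutation of X (section
        Restriction); then chi = psi^(a,b) with a the inverse of the latter.
        Conversely a pair (a,b) glues to a permutation of [n] (section Glue),
        which is an isomorphism H(psi) -> H(psi^(a,b)).
   (ii) Anti-isomorphisms H(psi) -> H(chi) are the isomorphisms to H(chi^T),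
        chi^T the transpose of chi, and the 2S_X^{x2} x U_m-orbit relation is
        the union of the S_X^{x2} x U_m-orbit relations for chi and chi^T.
   (iii) Commutativity makes psi and chi symmetric, and for symmetric
        functions psi' psi {i,j} = psi i j, so the two orbit relations agree. *)

Set Implicit Arguments.
Unset Strict Implicit.
Unset Printing Implicit Defensive.

Section Layout.
Variables (n m : nat) (hmn : m < n).
Local Notation emb := (widen_ord (ltnW hmn)).

Lemma emb_inj : injective emb.
Proof. by move=> k l /(congr1 val) /= /val_inj. Qed.

Variant layout_spec (i : 'I_n) : Prop :=
  | LayoutX (x : Xt n m) of i = val x
  | LayoutLow (k : 'I_m) of i = emb k.

Lemma layoutP (i : 'I_n) : layout_spec i.
Proof.
case: (leqP m i) => h.
- by apply: (@LayoutX _ (Sub i h)); apply: val_inj.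
- by apply: (@LayoutLow _ (Ordinal h)); apply: val_inj.
Qed.

Lemma low_notX (k : 'I_m) : insub (emb k) = None :> option (Xt n m).
Proof. by rewrite insubN //= -ltnNge. Qed.

Variable psi : Xt n m -> Xt n m -> 'I_m.

Lemma Hmul_X (x y : Xt n m) : Hmul psi (val x) (val y) = emb (psi x y).
Proof.
apply: val_inj; rewrite /Hmul !valK insubdK //.
exact: ltn_trans (ltn_ord _) hmn.
Qed.

Lemma Hmul_lowl (x y : 'I_n) : x < m -> val (Hmul psi x y) = 0.
Proof.
move=> x_low; rewrite /Hmul insubN -?ltnNge // insubdK //.
exact: leq_ltn_trans hmn.
Qed.

Lemma Hmul_lowr (x y : 'I_n) : y < m -> val (Hmul psi x y) = 0.
Proof.
move=> y_low; rewrite /Hmul [insub y]insubN -?ltnNge //.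
by case: (insub x) => [?|]; rewrite insubdK //; apply: leq_ltn_trans hmn.
Qed.

Lemma Hmul_low (hm : 0 < m) (x y : 'I_n) : val (Hmul psi x y) < m.
Proof.
case: (layoutP x) => [x' ->|k ->]; last by rewrite Hmul_lowl /=.
case: (layoutP y) => [y' ->|l ->]; last by rewrite Hmul_lowr /=.
by rewrite Hmul_X /=.
Qed.

End Layout.
Arguments emb_inj {n m} hmn [x1 x2].

Section Restriction.
Variables (n m : nat) (hmn : m < n) (f : 'I_n -> 'I_n) (f_inj : injective f).
Local Notation emb := (widen_ord (ltnW hmn)).
Hypothesis f_low : forall k : 'I_m, f (emb k) < m.

Definition low_restr (k : 'I_m) : 'I_m := Ordinal (f_low k).

Lemma low_restr_inj : injective low_restr.
Proof.
move=> k l /(congr1 val) /= /val_inj eq_fkl.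
exact: emb_inj hmn _ _ (f_inj eq_fkl).
Qed.

Definition low_perm : {perm 'I_m} := perm low_restr_inj.

Lemma low_permE (k : 'I_m) : emb (low_perm k) = f (emb k).
Proof. by apply: val_inj; rewrite /= permE. Qed.

(* f maps X into X: otherwise f i = f k for some k in [m], as the
   restriction to [m] is onto. *)
Lemma f_high (i : 'I_n) : m <= i -> m <= f i.
Proof.
move=> i_high; rewrite leqNgt; apply/negP => fi_low.
pose k := (low_perm^-1)%g (Ordinal fi_low).
have i_emb : i = emb k.
  by apply: f_inj; rewrite -low_permE permKV; apply: val_inj.
by move: i_high; rewrite i_emb leqNgt /= ltn_ord.
Qed.

Definition high_restr (x : Xt n m) : Xt n m := Sub (f (val x)) (f_high (valP x)).

Lemma high_restr_inj : injective high_restr.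
Proof. by move=> x y /(congr1 val) /= /f_inj /val_inj. Qed.

Definition high_perm : {perm Xt n m} := perm high_restr_inj.

Lemma high_permE (x : Xt n m) : val (high_perm x) = f (val x).
Proof. by rewrite permE. Qed.

End Restriction.

Section Glue.
Variables (n m : nat) (hmn : m < n) (a : {perm Xt n m}) (b : {perm 'I_m}).
Local Notation emb := (widen_ord (ltnW hmn)).

Definition glue (i : 'I_n) : 'I_n :=
  if insub i is Some x then val (a x)
  else if insub (val i) is Some k then emb (b k) else i.

Lemma glueX (x : Xt n m) : glue (val x) = val (a x).
Proof. by rewrite /glue valK. Qed.

Lemma glue_low (k : 'I_m) : glue (emb k) = emb (b k).
Proof. by rewrite /glue low_notX /= valK. Qed.

Lemma glue_inj : injective glue.
Proof.
have X_low (x : Xt n m) (k : 'I_m) : val (a x) <> emb (b k).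
  by move=> e; have := valP (a x); rewrite e leqNgt /= ltn_ord.
move=> i j; case: (layoutP hmn i) => [x ->|k ->]; case: (layoutP hmn j) => [y ->|l ->];
  rewrite ?glueX ?glue_low.
- by move/val_inj/perm_inj ->.
- by move/X_low.
- by move/esym/X_low.
- by move/(emb_inj hmn)/perm_inj ->.
Qed.

Lemma glue_lowP (i : 'I_n) : i < m -> glue i < m.
Proof.
case: (layoutP hmn i) => [x ->|k ->]; last by rewrite glue_low /=.
by have := valP x; rewrite leqNgt => /negbTE ->.
Qed.

Lemma glue_one (hb : in_Um b) (k : 'I_m) : val k = 0 -> glue (emb k) = emb k.
Proof. by move=> k0; rewrite glue_low hb. Qed.

End Glue.

Section Isomorphism.
Variables (n m : nat) (hmn : m < n) (psi chi : Xt n m -> Xt n m -> 'I_m).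
Local Notation emb := (widen_ord (ltnW hmn)).

Definition Hmorphism (f : 'I_n -> 'I_n) : Prop :=
  forall x y, f (Hmul psi x y) = Hmul chi (f x) (f y).

Section ForwardDirection.
Variables (f : 'I_n -> 'I_n) (fH : Hmorphism f).

(* A morphism fixes 1: 1 is idempotent, and the only idempotent among the
   products of H(chi) is 1. *)
Lemma Hmorphism_one (k : 'I_m) : val k = 0 -> f (emb k) = emb k.
Proof.
move=> k0; have hm : 0 < m by rewrite -k0 ltn_ord.
have k_idem : Hmul psi (emb k) (emb k) = emb k.
  by apply: val_inj; rewrite Hmul_lowl /= ?k0.
have fk_idem : f (emb k) = Hmul chi (f (emb k)) (f (emb k)) by rewrite -fH k_idem.
have fk_low : f (emb k) < m by rewrite fk_idem Hmul_low.
by apply: val_inj; rewrite fk_idem Hmul_lowl.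
Qed.

(* If H(psi) is in Z_{n,m}, a morphism maps [m] into [m]: every element of
   [m] \ {1} is a product. *)
Lemma Hmorphism_low (hpsi : inZ psi) (k : 'I_m) : f (emb k) < m.
Proof.
have hm : 0 < m by rewrite (leq_ltn_trans _ (ltn_ord k)).
case: (eqVneq (val k) 0) => [k0|/eqP k_neq0]; first by rewrite Hmorphism_one /=.
have [x [y <-]] := hpsi k k_neq0.
by rewrite -Hmul_X fH Hmul_low.
Qed.

End ForwardDirection.

(* Part (i), "only if": split an isomorphism along [n] = [m] ⊔ X. *)
Lemma iso_orbit (hpsi : inZ psi) :
  sg_isomorphic (Hmul psi) (Hmul chi) -> orbit_SX2_Um psi chi.
Proof.
case=> f [/bij_inj f_inj fH].
have f_low := Hmorphism_low fH hpsi.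
exists (high_perm f_inj f_low)^-1%g, (low_perm f_inj f_low); split.
- by move=> k k0; apply: (emb_inj hmn); rewrite low_permE Hmorphism_one.
- move=> x1 x2; apply: (emb_inj hmn).
  by rewrite low_permE -(Hmul_X hmn psi) fH -!(high_permE f_inj f_low) !permKV Hmul_X.
Qed.

(* Part (i), "if": glue a^-1 and b to an isomorphism. *)
Lemma orbit_iso : orbit_SX2_Um psi chi -> sg_isomorphic (Hmul psi) (Hmul chi).
Proof.
case=> a [b [hb hab]]; pose f := glue hmn (a^-1)%g b.
exists f; split; first exact/injF_bij/glue_inj.
(* products with a factor in [m] are 1 on both sides *)
have low_factor (x y : 'I_n) : x < m \/ y < m -> f (Hmul psi x y) = Hmul chi (f x) (f y).
  move=> xy_low; have hm : 0 < m by case: xy_low; apply: leq_ltn_trans.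
  have fxy_low : f x < m \/ f y < m.
    by case: xy_low => ?; [left | right]; apply: glue_lowP.
  have one_psi : Hmul psi x y = emb (Ordinal hm).
    by apply: val_inj; case: xy_low => ?; [rewrite Hmul_lowl | rewrite Hmul_lowr].
  rewrite one_psi /f glue_one //; apply: val_inj.
  by case: fxy_low => ?; [rewrite Hmul_lowl | rewrite Hmul_lowr].
move=> x y; case: (layoutP hmn x) => [x' ->|k ->]; last by apply: low_factor; left; rewrite /=.
case: (layoutP hmn y) => [y' ->|l ->]; last by apply: low_factor; right; rewrite /=.
by rewrite /f Hmul_X glue_low !glueX Hmul_X hab !permKV.
Qed.

End Isomorphism.

Section Transpose.
Variables (n m : nat) (hmn : m < n).

Definition transpose (T U : Type) (phi : T -> T -> U) : T -> T -> U := fun x y => phi y x.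

Lemma Hmul_transpose (chi : Xt n m -> Xt n m -> 'I_m) (x y : 'I_n) :
  Hmul (transpose chi) x y = Hmul chi y x.
Proof.
apply: val_inj; case: (layoutP hmn x) => [x' ->|k ->]; last first.
  by rewrite Hmul_lowl ?Hmul_lowr /=.
case: (layoutP hmn y) => [y' ->|l ->]; last by rewrite Hmul_lowr ?Hmul_lowl /=.
by rewrite !Hmul_X.
Qed.

Lemma anti_iso_transpose (psi chi : Xt n m -> Xt n m -> 'I_m) :
  sg_anti_isomorphic (Hmul psi) (Hmul chi) <->
  sg_isomorphic (Hmul psi) (Hmul (transpose chi)).
Proof. by split; case=> f [f_bij fH]; exists f; split=> // x y; rewrite fH Hmul_transpose. Qed.

End Transpose.

Lemma perm_I2 (p : {perm 'I_2}) :
  (p ord0 = ord0 /\ p ord_max = ord_max) \/ (p ord0 = ord_max /\ p ord_max = ord0).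
Proof.
have p_neq : p ord0 != p ord_max by rewrite (inj_eq perm_inj).
move: p_neq; case: (p ord0) => [[|[|?]] ?]; case: (p ord_max) => [[|[|?]] ?] //= _;
  by [left; split; apply: val_inj | right; split; apply: val_inj].
Qed.

(* chi is in the 2S_X^{x2} x U_m-orbit of psi iff chi or chi^T is in its
   S_X^{x2} x U_m-orbit: the S_2 component either fixes or swaps the pair. *)
Lemma orbit_2SX2_split (n m : nat) (psi chi : Xt n m -> Xt n m -> 'I_m) :
  orbit_2SX2_Um psi chi <-> orbit_SX2_Um psi chi \/ orbit_SX2_Um psi (transpose chi).
Proof.
split.
- case=> p [a [b [hb hab]]]; rewrite /sel2 in hab.
  case: (perm_I2 p) => [[-> ->]|[-> ->]] /= in hab; [left | right];
    by exists a, b; split=> // x1 x2; rewrite /transpose hab.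
- case=> [[a [b [hb hab]]]|[a [b [hb hab]]]].
  + by exists 1%g, a, b; split=> // x1 x2; rewrite !perm1 hab.
  + exists (tperm ord0 ord_max), a, b; split=> // x1 x2.
    by rewrite tpermL tpermR /= -hab.
Qed.

Lemma enum_set2 (T : finType) (i j : T) :
  i != j -> enum [set i; j] = [:: i; j] \/ enum [set i; j] = [:: j; i].
Proof.
move=> ij; have size2 : size (enum [set i; j]) = 2 by rewrite -cardE cards2 ij.
have := enum_uniq [set i; j].
case E: (enum [set i; j]) size2 => [|u [|v []]] // _; rewrite /= inE andbT => uv.
have : u \in [set i; j] by rewrite -mem_enum E mem_head.
have : v \in [set i; j] by rewrite -mem_enum E !inE eqxx orbT.
rewrite !inE => /orP[] /eqP v_eq /orP[] /eqP u_eq; subst u v;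
  by [left | right | rewrite eqxx in uv].
Qed.

Section Commutative.
Variables (n m : nat).

Definition symmetric2 (T U : Type) (phi : T -> T -> U) : Prop := forall x y, phi x y = phi y x.

Lemma commutative_symmetric (hmn : m < n) (psi : Xt n m -> Xt n m -> 'I_m) :
  commutative_mul (Hmul psi) -> symmetric2 psi.
Proof.
move=> psi_comm x y; apply: (emb_inj hmn).
by rewrite -!(Hmul_X hmn) psi_comm.
Qed.

Lemma psi'_pair (psi : Xt n m -> Xt n m -> 'I_m) (psi_sym : symmetric2 psi) (i j : Xt n m) :
  psi' psi [set i; j] = Some (psi i j).
Proof.
rewrite /psi'; case: (eqVneq i j) => [<-|/enum_set2 [] ->] //.
- by rewrite setUid enum_set1.
- by rewrite psi_sym.
Qed.

Lemma card12 (T : finType) (S : {set T}) :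
  (#|S| == 1) || (#|S| == 2) -> exists i j, S = [set i; j].
Proof.
case/orP => [/cards1P [x ->]|/cards2P [x [y [_ ->]]]]; last by exists x, y.
by exists x, x; rewrite setUid.
Qed.

Lemma orbit_psi' (psi chi : Xt n m -> Xt n m -> 'I_m) :
  symmetric2 psi -> symmetric2 chi ->
  orbit_SX2_Um psi chi <-> orbit_SX2set_Um (psi' psi) (psi' chi).
Proof.
move=> psi_sym chi_sym; split; case=> a [b [hb hab]]; exists a, b; split=> //.
- by move=> S /card12 [i [j ->]]; rewrite imsetU1 imset_set1 !psi'_pair //= hab.
- move=> x1 x2; have card_x12 : (#|[set x1; x2]| == 1) || (#|[set x1; x2]| == 2).
    by rewrite cards2; case: (x1 != x2).
  by move: (hab _ card_x12); rewrite imsetU1 imset_set1 !psi'_pair //= => -[].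
Qed.

End Commutative.

Theorem lemma6p2 (n m : nat) (hm2 : 2 <= m) (hmn : m <= n - 1)
    (psi chi : Xt n m -> Xt n m -> 'I_m)
    (hpsi : inZ psi) (hchi : inZ chi) :
  (sg_isomorphic (Hmul psi) (Hmul chi) <-> orbit_SX2_Um psi chi) /\
  (sg_isomorphic (Hmul psi) (Hmul chi) \/ sg_anti_isomorphic (Hmul psi) (Hmul chi)
     <-> orbit_2SX2_Um psi chi) /\
  (commutative_mul (Hmul psi) -> commutative_mul (Hmul chi) ->
     (sg_isomorphic (Hmul psi) (Hmul chi) <-> orbit_SX2set_Um (psi' psi) (psi' chi))).
Proof.
have lt_mn : m < n by lia.
have iso_iff (phi : Xt n m -> Xt n m -> 'I_m) :
    sg_isomorphic (Hmul psi) (Hmul phi) <-> orbit_SX2_Um psi phi.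
  by split; [apply: iso_orbit | apply: orbit_iso].
split; first exact: iso_iff.
split.
- by rewrite (anti_iso_transpose lt_mn) orbit_2SX2_split -!iso_iff.
- move=> psi_comm chi_comm; rewrite iso_iff orbit_psi' //;
    exact: commutative_symmetric.
Qed.
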